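(* Let $\mathcal{A}\in\mathbb{C}^{I_{1\ldots N}\times I_{1\ldots N}}$ and let $\mathcal{N}\in\mathbb{C}^{I_{1\ldots N}\times I_{1\ldots N}}$ be a Hermitian positive definite tensor. If $\mathcal{A}$ is weighted normal, i.e. $\mathcal{A}^{\#}_{\mathcal{N}\mathcal{N}}*_N\mathcal{A}=\mathcal{A}*_N\mathcal{A}^{\#}_{\mathcal{N}\mathcal{N}}$, then $\mathcal{A}*_N\mathcal{A}^{\dagger}_{\mathcal{N},\mathcal{N}}=\mathcal{A}^{\dagger}_{\mathcal{N},\mathcal{N}}*_N\mathcal{A}$.
   Context: Write $I_{1\ldots N}$ for $I_1\times\cdots\times I_N$. Einstein product: $(\mathcal{A}*_N\mathcal{B})_{i_1\ldots i_Nj_1\ldots j_N}=\sum_{k_1,\ldots,k_N}a_{i_1\ldots i_Nk_1\ldots k_N}b_{k_1\ldots k_Nj_1\ldots j_N}$. $\mathcal{A}^H$ is the conjugate transpose. Inverses are with respect to $*_N$ and the identity tensor (entry 1 where the two index blocks coincide, 0 otherwise). $\mathcal{N}$ is Hermitian positive definite if $\mathcal{N}^H=\mathcal{N}$ and $\mathcal{X}^H*_N\mathcal{N}*_N\mathcal{X}>0$ for all nonzero $\mathcal{X}$. Weighted conjugate transpose: $\mathcal{A}^{\#}_{\mathcal{N}\mathcal{N}}=\mathcal{N}^{-1}*_N\mathcal{A}^H*_N\mathcal{N}$. Weighted Moore-Penrose inverse $\mathcal{A}^{\dagger}_{\mathcal{N},\mathcal{N}}$: the unique $\mathcal{X}$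 with $\mathcal{A}*_N\mathcal{X}*_N\mathcal{A}=\mathcal{A}$, $\mathcal{X}*_N\mathcal{A}*_N\mathcal{X}=\mathcal{X}$, $(\mathcal{N}*_N\mathcal{A}*_N\mathcal{X})^H=\mathcal{N}*_N\mathcal{A}*_N\mathcal{X}$, $(\mathcal{N}*_N\mathcal{X}*_N\mathcal{A})^H=\mathcal{N}*_N\mathcal{X}*_N\mathcal{A}$. *)

From HB Require Import structures.
From mathcomp Require Import all_boot all_order all_algebra.
From mathcomp Require Export complex.
Set Implicit Arguments. Unset Strict Implicit. Unset Printing Implicit Defensive.
Import Order.TTheory GRing.Theory Num.Theory.
Local Open Scope ring_scope.

Section Tensors.
Variable R : rcfType.
Local Notation C := (R[i])%C.

Definition idx (N : nat) (I : 'I_N -> nat) : finType :=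
  {dffun forall k : 'I_N, 'I_(I k)}.

Variables (N : nat) (I : 'I_N -> nat).
Local Notation T := (idx I).

(* A tensor in C^{I_1..N x I_1..N}: entry a_{i_1..i_N j_1..j_N} = A i j. *)
Definition tensor := T -> T -> C.

Definition einstein (A B : tensor) : tensor :=
  fun i j => \sum_(k : T) A i k * B k j.

Definition tid : tensor := fun i j => if i == j then 1 else 0.

Definition tconjT (A : tensor) : tensor := fun i j => (A j i)^*.

(* inverse with respect to *_N, via the matrix unfolding of T x T *)
Definition tmx (A : tensor) : 'M[C]_#|T| :=
  \matrix_(i, j) A (enum_val i) (enum_val j).
Definition tinv (A : tensor) : tensor :=
  fun i j => invmx (tmx A) (enum_rank i) (enum_rank j).

Definition hpd (M : tensor) : Prop :=
  tconjT M = M /\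
  forall x : T -> C, (exists i, x i != 0) ->
    0 < \sum_(i : T) \sum_(j : T) (x i)^* * M i j * x j.

Definition wconjT (M A : tensor) : tensor :=
  einstein (einstein (tinv M) (tconjT A)) M.

Definition is_wmpi (M A X : tensor) : Prop :=
  [/\ einstein (einstein A X) A = A,
      einstein (einstein X A) X = X,
      tconjT (einstein M (einstein A X)) = einstein M (einstein A X) &
      tconjT (einstein M (einstein X A)) = einstein M (einstein X A)].

End Tensors.

(* Write a^# for the weighted adjoint N^-1 a^H N. It is an additive,
   anti-multiplicative involution, and it is proper (a^# a = 0 forces a = 0)
   because N is positive definite. In any ring with such an involution, if
   a x a = a and both a x and x a are self-adjoint, then x a a^# = a^# and
   a^# a x = a^#. For normal a this gives (x a a - a) a^# = 0 and
   a^# (a a x - a) = 0, which properness turns into x a a = a and a a x = a;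
   hence a x = x a a x = x a. *)

From Stdlib Require Import FunctionalExtensionality.
From mathcomp Require Import all_boot all_order all_algebra complex.
Import Order.TTheory GRing.Theory.
Set Implicit Arguments. Unset Strict Implicit. Unset Printing Implicit Defensive.
Local Open Scope ring_scope.
Local Open Scope sesquilinear_scope.

Section ProperInvolution.
Variables (R : pzRingType) (s : R -> R).
Hypotheses (sB : forall x y, s (x - y) = s x - s y)
  (sM : forall x y, s (x * y) = s y * s x) (sK : involutive s)
  (s_proper : forall x, s x * x = 0 -> x = 0).

Lemma proper_mul_s x : x * s x = 0 -> x = 0.
Proof.
have s0 : s 0 = 0 by move: (sB 0 0); rewrite !subrr.
by move=> xsx; rewrite -[x]sK (@s_proper (s x)) ?sK.
Qed.

Lemma normal_mpinv_comm a x : s a * a = a * s a ->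
  a * x * a = a -> s (a * x) = a * x -> s (x * a) = x * a ->
  a * x = x * a.
Proof.
move=> normal axa sax sxa.
have xa_sa : x * a * s a = s a by rewrite -sxa -sM mulrA axa.
have sa_ax : s a * (a * x) = s a by rewrite -{1}sax -sM axa.
have xaa : x * a * a = a.
  apply/subr0_eq/proper_mul_s.
  have Y_sa : (x * a * a - a) * s a = 0.
    by rewrite mulrBl -!mulrA -normal !mulrA xa_sa subrr.
  by rewrite sB sM sxa mulrBr mulrA Y_sa mul0r subrr.
have aax : a * (a * x) = a.
  apply/subr0_eq/s_proper.
  have sa_Z : s a * (a * (a * x) - a) = 0.
    by rewrite mulrBr mulrA normal -mulrA sa_ax subrr.
  by rewrite sB sM sax mulrBl -mulrA sa_Z mulr0 subrr.
by rewrite -{1}xaa -mulrA -(mulrA x) aax.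
Qed.

End ProperInvolution.

Section WeightedAdjoint.
Variables (C : numClosedFieldType) (n : nat) (W : 'M[C]_n).
Hypotheses (W_herm : W ^t* = W)
  (W_posdef : forall p (Z : 'M[C]_(n, p)), Z ^t* *m W *m Z = 0 -> Z = 0).

Lemma unitmx_posdef : W \in unitmx.
Proof.
rewrite unitmxE unitfE; apply/negP => /det0P [v v_neq0 vW].
have /W_posdef v_eq0 : v ^t* ^t* *m W *m v ^t* = 0 by rewrite trmxCK vW mul0mx.
by move: v_neq0; rewrite -[v]trmxCK v_eq0 trmx0 map_mx0 eqxx.
Qed.

Definition wadj (B : 'M[C]_n) : 'M_n := invmx W *m B ^t* *m W.

Lemma wadjB (B D : 'M_n) : wadj (B - D) = wadj B - wadj D.
Proof. by rewrite /wadj linearB map_mxB mulmxBr mulmxBl. Qed.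

Lemma wadjM (B D : 'M_n) : wadj (B *m D) = wadj D *m wadj B.
Proof.
rewrite /wadj trmx_mul map_mxM !mulmxA -[invmx W *m _ *m W *m invmx W]mulmxA.
by rewrite mulmxV ?unitmx_posdef // mulmx1.
Qed.

Lemma wadjK : involutive wadj.
Proof.
have invW_herm : (invmx W) ^t* = invmx W by rewrite trmx_inv map_invmx W_herm.
move=> B; rewrite /wadj !trmx_mul !map_mxM invW_herm trmxCK W_herm !mulmxA.
by rewrite mulVmx ?unitmx_posdef // mul1mx -mulmxA mulVmx ?unitmx_posdef // mulmx1.
Qed.

Lemma wadj_proper (B : 'M_n) : wadj B *m B = 0 -> B = 0.
Proof.
move=> /(congr1 (mulmx W)); rewrite /wadj mulmx0 !mulmxA.
by rewrite mulmxV ?unitmx_posdef // mul1mx; apply: W_posdef.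
Qed.

Lemma wadj_herm (B : 'M_n) : (W *m B) ^t* = W *m B -> wadj B = B.
Proof.
rewrite trmx_mul map_mxM W_herm => WB_herm.
by rewrite /wadj -mulmxA WB_herm mulmxA mulVmx ?unitmx_posdef // mul1mx.
Qed.

Lemma wadj_normal_mpinv_comm (A X : 'M_n) :
  wadj A *m A = A *m wadj A -> A *m X *m A = A ->
  (W *m (A *m X)) ^t* = W *m (A *m X) -> (W *m (X *m A)) ^t* = W *m (X *m A) ->
  A *m X = X *m A.
Proof.
move=> normal AXA /wadj_herm AX_herm /wadj_herm XA_herm.
exact: (normal_mpinv_comm wadjB wadjM wadjK wadj_proper normal AXA AX_herm XA_herm).
Qed.

End WeightedAdjoint.

Section TensorUnfolding.
Variables (R : rcfType) (N : nat) (I : 'I_N -> nat).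
Local Notation T := (idx I).
Local Notation tensor := (tensor R I).

Lemma sum_enum_val (F : T -> R[i]) :
  \sum_(k : T) F k = \sum_(k < #|T|) F (enum_val k).
Proof. exact: big_enum_val. Qed.

Lemma tmx_inj : injective (@tmx R N I).
Proof.
move=> A B AB; apply: functional_extensionality => i.
apply: functional_extensionality => j.
have := congr1 (fun D : 'M_#|T| => D (enum_rank i) (enum_rank j)) AB.
by rewrite /= !mxE !enum_rankK.
Qed.

Lemma tmx_einstein (A B : tensor) : tmx (einstein A B) = tmx A *m tmx B.
Proof.
apply/matrixP => i j; rewrite !mxE /einstein sum_enum_val.
by apply: eq_bigr => k _; rewrite !mxE.
Qed.

Lemma tmx_tconjT (A : tensor) : tmx (tconjT A) = (tmx A) ^t*.
Proof. by apply/matrixP => i j; rewrite !mxE. Qed.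

Lemma tmx_wconjT (M A : tensor) : tmx (wconjT M A) = wadj (tmx M) (tmx A).
Proof.
have tmx_tinv : tmx (tinv M) = invmx (tmx M).
  by apply/matrixP => i j; rewrite !mxE /tinv !enum_valK.
by rewrite !tmx_einstein tmx_tinv tmx_tconjT.
Qed.

Lemma hpd_herm (M : tensor) : hpd M -> (tmx M) ^t* = tmx M.
Proof. by case=> M_herm _; rewrite -tmx_tconjT M_herm. Qed.

Lemma hpd_posdef (M : tensor) : hpd M ->
  forall p (Z : 'M_(#|T|, p)), Z ^t* *m tmx M *m Z = 0 -> Z = 0.
Proof.
case=> _ M_pos p Z ZMZ; apply/matrixP => k c; rewrite mxE.
apply/eqP/negPn/negP => Zkc_neq0.
pose z i := Z (enum_rank i) c.
have z_neq0 : exists i, z i != 0 by exists (enum_val k); rewrite /z enum_valK.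
have := M_pos z z_neq0.
have -> : \sum_i \sum_j (z i)^* * M i j * z j = (Z ^t* *m tmx M *m Z) c c.
  rewrite sum_enum_val (eq_bigr _ (fun i _ => sum_enum_val _)) exchange_big mxE.
  apply: eq_bigr => j _; rewrite mxE mulr_suml; apply: eq_bigr => i _.
  by rewrite !mxE /z !enum_valK.
by rewrite ZMZ mxE ltxx.
Qed.

End TensorUnfolding.

Theorem theorem4p11 (R : rcfType) (N : nat) (I : 'I_N -> nat)
    (A M : tensor R I) :
  hpd M ->
  einstein (wconjT M A) A = einstein A (wconjT M A) ->
  forall X : tensor R I, is_wmpi M A X ->
  einstein A X = einstein X A.
Proof.
move=> M_hpd normal X [AXA _ AX_herm XA_herm].
apply: tmx_inj; rewrite !tmx_einstein.
apply: (wadj_normal_mpinv_comm (hpd_herm M_hpd) (hpd_posdef M_hpd)).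
- by rewrite -tmx_wconjT -!tmx_einstein normal.
- by rewrite -!tmx_einstein AXA.
- by rewrite -!tmx_einstein -tmx_tconjT AX_herm.
- by rewrite -!tmx_einstein -tmx_tconjT XA_herm.
Qed.
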